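(* Let $N\ge1$, $V=\{1,\dots,N\}$, $A$ an $N\times N$ row-stochastic matrix, and $\sigma_1,\sigma_2,\dots$ random variables with values in $2^V$. Consider $x(k+1)=A_{\sigma_k}x(k)$, $k\ge1$, with deterministic $x(1)\in\mathbb R^N$. Suppose: (a) $\mathcal G(A)$ is rooted. (b) There exists $\alpha\in(0,1)$ such that whenever $\mathbb P(\sigma_k\mid\sigma_{k-1},\dots,\sigma_1)\neq0$, it is $\ge\alpha$. (c) $\mathbb P(\sigma_k=\{j\}\mid\sigma_{k-1},\dots,\sigma_1)\neq0$ for all $j\in V$ and all $k\ge1$. Then the iteration reaches consensus almost surely.
   Context: $\mathcal G(A)$ is the directed graph on $V$ with an edge $(j,i)$ iff $a_{ij}>0$; it is rooted if some node $r$ has a directed path to every other node. For $\sigma\subseteq V$, $A_\sigma$ is the matrix whose $j$-th row equals the $j$-th row of $A$ if $j\in\sigma$ and $e_j^T$ otherwise. For $k=1$ conditional probabilities given the empty past are unconditional. The iteration reaches consensus almost surely if for every $\varepsilon>0$ and every $x(1)$, $\lim_{k\to\infty}\mathbb P\big(\sum_{j=1}^N (x_j(k)-\frac1N\sum_{i=1}^N x_i(k))^2\ge\varepsilon\big)=0$. *)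

From HB Require Import structures.
From mathcomp Require Import all_boot all_order all_algebra.
From mathcomp Require Import all_classical all_reals all_analysis.

Set Implicit Arguments.
Unset Strict Implicit.
Unset Printing Implicit Defensive.

Import Order.TTheory GRing.Theory Num.Theory.
Local Open Scope classical_set_scope.
Local Open Scope ring_scope.

Section Defs.
Variable R : realType.
Variable N : nat.

Definition row_stochastic (A : 'M[R]_N) : Prop :=
  (forall i j, 0 <= A i j) /\ (forall i, \sum_(j < N) A i j = 1).

Definition graph_edge (A : 'M[R]_N) : rel 'I_N := fun j i => 0 < A i j.

Definition rooted (A : 'M[R]_N) : Prop :=
  exists r : 'I_N, forall i : 'I_N, connect (graph_edge A) r i.

Definition A_sub (A : 'M[R]_N) (s : {set 'I_N}) : 'M[R]_N :=
  \matrix_(j, l) (if j \in s then A j l else (j == l)%:R).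

(* trajectory: traj A sig x1 n = x(n+1), where sig n = sigma_(n+1);
   x(1) = x1, x(k+1) = A_(sigma_k) x(k). *)
Fixpoint traj (A : 'M[R]_N) (sig : nat -> {set 'I_N}) (x1 : 'cV[R]_N) (n : nat)
  : 'cV[R]_N :=
  match n with
  | 0 => x1
  | n'.+1 => A_sub A (sig n') *m traj A sig x1 n'
  end.

Definition disagreement (x : 'cV[R]_N) : R :=
  \sum_(j < N) (x j 0 - (N%:R)^-1 * \sum_(i < N) x i 0) ^+ 2.
End Defs.

Section Prob.
Context {d : measure_display} {T : measurableType d} {R : realType} {N : nat}.
Variable P : probability T R.
Variable sigma : nat -> T -> {set 'I_N}.

(* the past sigma_1, ..., sigma_k (with sigma n = sigma_(n+1)) *)
Definition past (k : nat) (w : T) : seq {set 'I_N} :=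
  [seq sigma i w | i <- iota 0 k].

Definition past_event (k : nat) (h : seq {set 'I_N}) : set T :=
  [set w | past k w = h].

(* P(sigma_(k+1) = s | (sigma_1..sigma_k) = h), meaningful when the
   conditioning event has positive probability *)
Definition cond_prob (k : nat) (h : seq {set 'I_N}) (s : {set 'I_N}) : R :=
  fine (P (past_event k h `&` [set w | sigma k w = s])) /
  fine (P (past_event k h)).
End Prob.

(* Let beta > 0 be the smallest positive entry of A and r a root of G(A).  If
   x >= lo entrywise, updating one node at a time every node other than r, N
   times over, lifts every entry to at least lo + c (x_r - lo) with
   c = beta^(number of updates): the lift spreads along the edges out of r,
   losing a factor beta per update, and a shortest path from r has fewer than N
   edges.  Applied to x and to -x, this fixed word of singleton updates shrinks
   the spread max x - min x by the factor 1 - c; as no update increases the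
   spread, a fixed power of the word drives the disagreement below eps.
   By (b) and (c) every singleton has conditional probability at least alpha
   given any past, so this word, of length L, fills a given block of L steps
   with conditional probability at least alpha^L.  Keeping disagreement >= eps
   after K L steps requires the first K blocks all to miss the word, which has
   probability at most (1 - alpha^L)^K. *)

From HB Require Import structures.
From mathcomp Require Import all_boot all_order all_algebra.
From mathcomp Require Import all_classical all_reals all_analysis.
From mathcomp Require Import ring lra.
Import Order.TTheory GRing.Theory Num.Theory.
Local Open Scope ring_scope.

Set Implicit Arguments.
Unset Strict Implicit.
Unset Printing Implicit Defensive.

Lemma foldl_flatten_nseq (T S : Type) (f : S -> T -> S) (x : S) (s : seq T) n :
  foldl f x (flatten (nseq n s)) = iter n (fun y => foldl f y s) x.
Proof. by elim: n x => [|n IH] x //; rewrite iterSr -IH /= foldl_cat. Qed.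

Section Updates.
Variables (R : realType) (N : nat) (A : 'M[R]_N).
Hypothesis HA : row_stochastic A.

Lemma A_sub_mulE (s : {set 'I_N}) (x : 'cV[R]_N) k :
  (A_sub A s *m x) k 0 = if k \in s then \sum_l A k l * x l 0 else x k 0.
Proof.
rewrite mxE; under eq_bigr do rewrite mxE.
case: (k \in s) => //.
rewrite (bigD1 k) //= eqxx mul1r big1 ?addr0 // => l /negbTE.
by rewrite eq_sym => ->; rewrite mul0r.
Qed.

Definition entries_ge (lo : R) (x : 'cV[R]_N) := forall i, lo <= x i 0.

Lemma average_ge (lo : R) (x : 'cV[R]_N) k p : entries_ge lo x ->
  lo + A k p * (x p 0 - lo) <= \sum_l A k l * x l 0.
Proof.
move=> hx.
have -> : \sum_l A k l * x l 0 = lo + \sum_l A k l * (x l 0 - lo).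
  under [in RHS]eq_bigr do rewrite mulrBr.
  by rewrite sumrB -mulr_suml HA.2 mul1r addrC subrK.
rewrite lerD2l (bigD1 p) //= lerDl; apply: sumr_ge0 => l _.
by apply: mulr_ge0; [exact: HA.1 | rewrite subr_ge0].
Qed.

Lemma entries_ge_A_sub lo s x : entries_ge lo x -> entries_ge lo (A_sub A s *m x).
Proof.
move=> hx i; rewrite A_sub_mulE; case: ifP => // _.
apply: (le_trans _ (average_ge i i hx)); rewrite lerDl.
by apply: mulr_ge0; [exact: HA.1 | rewrite subr_ge0].
Qed.

Lemma traj_opp sig (x1 : 'cV[R]_N) n : traj A sig (- x1) n = - traj A sig x1 n.
Proof. by elim: n => //= n ->; rewrite mulmxN. Qed.

Lemma entries_ge_traj lo sig x1 n t :
  entries_ge lo (traj A sig x1 n) -> entries_ge lo (traj A sig x1 (n + t)).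
Proof. by elim: t => [|t IH]; rewrite ?addn0 // addnS => /IH; apply: entries_ge_A_sub. Qed.

Definition update (x : 'cV[R]_N) (j : 'I_N) := A_sub A [set j] *m x.
Definition updates (js : seq 'I_N) (x : 'cV[R]_N) := foldl update x js.

Lemma updates_opp js x : updates js (- x) = - updates js x.
Proof. by elim: js x => //= j js IH x; rewrite /update mulmxN -IH. Qed.

Definition word_at (sig : nat -> {set 'I_N}) (n : nat) (js : seq 'I_N) : bool :=
  [seq sig i | i <- iota n (size js)] == [seq [set j]%SET | j <- js].

Lemma traj_word sig x1 n js : word_at sig n js ->
  traj A sig x1 (n + size js) = updates js (traj A sig x1 n).
Proof.
elim: js n => [|j js IH] n /=; first by rewrite addn0.
rewrite /word_at /= eqseq_cons => /andP[/eqP hj hjs].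
by rewrite addnS -addSn IH //= hj.
Qed.

(* The upper bound [hi] is stated as the lower bound [-hi] of [-x]. *)
Definition spread_le (d : R) (x : 'cV[R]_N) :=
  exists lo hi, hi - lo <= d /\ entries_ge lo x /\ entries_ge (- hi) (- x).

Lemma spread_le_traj d sig x1 n t :
  spread_le d (traj A sig x1 n) -> spread_le d (traj A sig x1 (n + t)).
Proof.
case=> lo [hi [hd [hlo hhi]]]; exists lo, hi; split; first exact: hd.
by split; [exact: entries_ge_traj | rewrite -traj_opp; apply: entries_ge_traj; rewrite traj_opp].
Qed.

Lemma spread_le_exists (x : 'cV[R]_N) : exists d, spread_le d x.
Proof.
pose M := \sum_i `|x i 0|.
have xM i : `|x i 0| <= M.
  by rewrite /M (bigD1 i) //= lerDl; apply: sumr_ge0 => l _.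
exists (M + M), (- M), M; split; first by rewrite opprK.
by split=> i; have := xM i; rewrite ler_norml ?mxE ?lerN2 => /andP[].
Qed.

Lemma disagreement_le_spread d (x : 'cV[R]_N) : (0 < N)%N -> spread_le d x ->
  disagreement x <= N%:R * d ^+ 2.
Proof.
move=> N0 [lo [hi [hd [hlo hhi]]]].
have xhi i : x i 0 <= hi by have := hhi i; rewrite mxE lerN2.
set av := (N%:R)^-1 * \sum_i x i 0.
have Npos : 0 < (N%:R : R) by rewrite ltr0n.
have sum_const (c : R) : \sum_(i < N) c = N%:R * c by rewrite sumr_const card_ord mulr_natl.
have av_lo : lo <= av.
  by rewrite ler_pdivlMl // -sum_const; apply: ler_sum => i _.
have av_hi : av <= hi.
  by rewrite ler_pdivrMl // -sum_const; apply: ler_sum => i _.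
rewrite /disagreement -/av -sum_const; apply: ler_sum => j _.
have hj : `|x j 0 - av| <= d by rewrite ler_norml; have := hlo j; have := xhi j; lra.
by rewrite -real_normK ?num_real //; apply: ler_pM.
Qed.

Lemma traj_eq_prefix sig sig' x1 k :
  (forall n, (n < k)%N -> sig n = sig' n) -> traj A sig x1 k = traj A sig' x1 k.
Proof.
elim: k => [|k IH] eq_sig //=.
by rewrite eq_sig // IH // => n /ltnW; exact: eq_sig.
Qed.

End Updates.

Section Contraction.
Variables (R : realType) (N : nat) (A : 'M[R]_N).
Hypothesis HA : row_stochastic A.
Variable r : 'I_N.
Hypothesis root_r : forall i, connect (graph_edge A) r i.
Variable beta : R.
Hypothesis beta_gt0 : 0 < beta.
Hypothesis beta_le1 : beta <= 1.
Hypothesis beta_le : forall i j, 0 < A i j -> beta <= A i j.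

Definition reach (S : {set 'I_N}) : {set 'I_N} :=
  (S :|: [set i | [exists p in S, 0 < A i p]])%SET.

Lemma sub_reach (S : {set 'I_N}) : S \subset reach S.
Proof. exact: finset.subsetUl. Qed.

Lemma reach_mono (S S' : {set 'I_N}) : S \subset S' -> reach S \subset reach S'.
Proof.
move=> sSS'; apply: finset.setUSS => //; apply/fintype.subsetP => i; rewrite !finset.inE.
by case/existsP=> p /andP[pS Ap]; apply/existsP; exists p; rewrite (fintype.subsetP sSS').
Qed.

Lemma iter_reach_mono m n (S : {set 'I_N}) :
  (m <= n)%N -> iter m reach S \subset iter n reach S.
Proof.
move/subnK <-; elim: (n - m)%N => [|k IH] /=; first exact: subxx.
exact: fintype.subset_trans IH (sub_reach _).
Qed.

Lemma last_in_iter_reach (S : {set 'I_N}) x p :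
  path (graph_edge A) x p -> x \in S -> last x p \in iter (size p) reach S.
Proof.
elim: p x S => [|a p IH] x S //= /andP[xa ap] xS; rewrite -iterS iterSr.
apply: IH ap _; rewrite !finset.inE; apply/orP; right; apply/existsP; exists x.
by rewrite xS.
Qed.

Lemma iter_reach_full : iter N reach [set r] = [set: 'I_N].
Proof.
apply/eqP; rewrite finset.eqEsubset finset.subsetT /=.
apply/fintype.subsetP => i _; have /connectP[p rp ->] := root_r i.
case/shortenP: rp => q rq uq _.
have size_q : (size q <= N)%N.
  by have := max_card (mem (r :: q)); rewrite (card_uniqP uq) card_ord => /ltnW.
apply: (fintype.subsetP (iter_reach_mono _ size_q)); apply: last_in_iter_reach rq _.
exact: set11.
Qed.

(* If the nodes of [S] are lifted before [j] is updated, those of [grow S j]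
   are lifted after. *)
Definition grow (S : {set 'I_N}) (j : 'I_N) : {set 'I_N} :=
  if [exists p in S, 0 < A j p] then j |: S else S.

Lemma sub_grow (S : {set 'I_N}) j : S \subset grow S j.
Proof. by rewrite /grow; case: ifP => _; [exact: finset.subsetUr | exact: subxx]. Qed.

Lemma sub_foldl_grow (S : {set 'I_N}) js : S \subset foldl grow S js.
Proof.
elim: js S => [|j js IH] S /=; first exact: subxx.
exact: fintype.subset_trans (sub_grow S j) (IH _).
Qed.

Lemma mem_foldl_grow (S : {set 'I_N}) js i :
  i \in js -> [exists p in S, 0 < A i p] -> i \in foldl grow S js.
Proof.
elim: js S => [|j js IH] S //=; rewrite finset.inE => /orP[/eqP-> hi|ijs hi].
  by apply: (fintype.subsetP (sub_foldl_grow _ _)); rewrite /grow hi setU11.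
apply: IH ijs _; case/existsP: hi => p /andP[pS Ap]; apply/existsP; exists p.
by rewrite (fintype.subsetP (sub_grow S j)).
Qed.

Definition nonroots := [seq j <- enum 'I_N | j != r].

Definition sweep (S : {set 'I_N}) := foldl grow S nonroots.

Lemma reach_sub_sweep (S : {set 'I_N}) : r \in S -> reach S \subset sweep S.
Proof.
move=> rS; apply/fintype.subsetP => i; rewrite !finset.inE => /orP[iS|hi].
  exact: (fintype.subsetP (sub_foldl_grow _ _)).
have [-> | ir] := eqVneq i r; first exact: (fintype.subsetP (sub_foldl_grow _ _)).
by apply: mem_foldl_grow hi; rewrite mem_filter ir mem_enum.
Qed.

Lemma iter_reach_sub_sweep n : iter n reach [set r] \subset iter n sweep [set r].
Proof.
elim: n => [|n IH] /=; first exact: subxx.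
apply: fintype.subset_trans (reach_mono IH) (reach_sub_sweep _).
apply: (fintype.subsetP IH); apply: (fintype.subsetP (iter_reach_mono _ (leq0n n))).
exact: set11.
Qed.

Lemma iter_sweep_full : iter N sweep [set r] = [set: 'I_N].
Proof.
apply/eqP; rewrite finset.eqEsubset finset.subsetT /= -iter_reach_full.
exact: iter_reach_sub_sweep.
Qed.

(* A lifted node of a grounded set stays lifted when it is updated again;
   [r] itself is never updated. *)
Definition grounded (S : {set 'I_N}) :=
  forall k, k \in S -> k != r -> exists2 p, p \in S & 0 < A k p.

Lemma grounded_set1 : grounded [set r].
Proof. by move=> k /set1P ->; rewrite eqxx. Qed.

Lemma grounded_grow S j : grounded S -> grounded (grow S j).
Proof.
rewrite /grow; case: ifP => // /existsP[p /andP[pS Ap]] hS k.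
rewrite in_setU1 => /orP[/eqP -> _|kS kr]; first by exists p; rewrite // in_setU1 pS orbT.
by have [q qS Aq] := hS k kS kr; exists q; rewrite // in_setU1 qS orbT.
Qed.

Definition lifted (S : {set 'I_N}) (lo c : R) (y : 'cV[R]_N) :=
  forall k, k \in S -> lo + c <= y k 0.

Lemma lifted_update S lo c y j :
  entries_ge lo y -> grounded S -> 0 <= c -> j != r -> lifted S lo c y ->
  lifted (grow S j) lo (beta * c) (update A y j).
Proof.
move=> hy hS c0 jr hl k kS.
have lift_le : lo + beta * c <= lo + c by rewrite lerD2l ler_piMl.
rewrite /update A_sub_mulE finset.in_set1.
have [ekj | kj] := eqVneq k j; last first.
  apply: le_trans lift_le (hl k _).
  by move: kS; rewrite /grow; case: ifP => // _; rewrite in_setU1 (negbTE kj).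
subst k; have [p pS Ap] : exists2 p, p \in S & 0 < A j p.
  move: kS; rewrite /grow; case: ifP => [/existsP[p /andP[pS Ap]] _ | _ jS].
    by exists p.
  exact: hS.
apply: (le_trans _ (average_ge HA j p hy)); rewrite lerD2l.
by apply: ler_pM; rewrite ?(ltW beta_gt0) ?beta_le // lerBrDl hl.
Qed.

Lemma lifted_updates js S lo c y : all (fun j => j != r) js -> entries_ge lo y ->
  grounded S -> 0 <= c -> lifted S lo c y ->
  lifted (foldl grow S js) lo (beta ^+ size js * c) (updates A js y).
Proof.
elim: js S c y => [|j js IH] S c y /=; first by rewrite expr0 mul1r.
case/andP => jr rjs hy hS c0 hl; rewrite exprSr -mulrA.
apply: IH => //; first exact: entries_ge_A_sub.
- exact: grounded_grow.
- by rewrite mulr_ge0 // ltW.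
- exact: lifted_update.
Qed.

Definition sweeps := flatten (nseq N nonroots).

Definition sweeps_gain := beta ^+ size sweeps.

Lemma grow_sweeps_full : foldl grow [set r] sweeps = [set: 'I_N].
Proof. rewrite foldl_flatten_nseq; exact: iter_sweep_full. Qed.

Lemma sweeps_lift lo x : entries_ge lo x ->
  entries_ge (lo + sweeps_gain * (x r 0 - lo)) (updates A sweeps x).
Proof.
move=> hx i.
have r_notin : all (fun j => j != r) sweeps.
  apply/allP => j /flattenP[s /nseqP[-> _]].
  by rewrite mem_filter => /andP[].
have hl : lifted [set r] lo (x r 0 - lo) x by move=> k /set1P ->; rewrite addrC subrK.
have := lifted_updates r_notin hx grounded_set1 _ hl.
rewrite grow_sweeps_full; apply; first by rewrite subr_ge0.
by rewrite finset.in_setT.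
Qed.

Lemma sweeps_gain_le1 : sweeps_gain <= 1.
Proof. by rewrite exprn_ile1 // ltW. Qed.

Lemma spread_le_sweeps d x : spread_le d x ->
  spread_le ((1 - sweeps_gain) * d) (updates A sweeps x).
Proof.
case=> lo [hi [hd [hlo hhi]]]; set c := sweeps_gain.
exists (lo + c * (x r 0 - lo)), (hi - c * (hi - x r 0)); split; last split.
- rewrite (_ : _ - _ = (1 - c) * (hi - lo)); last by ring.
  by apply: ler_wpM2l; rewrite // subr_ge0 sweeps_gain_le1.
- exact: sweeps_lift.
- have := sweeps_lift hhi; rewrite -updates_opp mxE.
  by rewrite (_ : - hi + c * (- x r 0 - - hi) = - (hi - c * (hi - x r 0))) //; ring.
Qed.

Lemma spread_le_iter_sweeps m d x : spread_le d x ->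
  spread_le ((1 - sweeps_gain) ^+ m * d) (updates A (flatten (nseq m sweeps)) x).
Proof.
elim: m d x => [|m IH] d x hx; first by rewrite mul1r.
rewrite /updates /= foldl_cat exprSr -mulrA; apply: IH; exact: spread_le_sweeps.
Qed.

End Contraction.

Lemma positive_entries_ge (R : realType) (N : nat) (A : 'M[R]_N) :
  row_stochastic A ->
  exists2 beta, 0 < beta <= 1 & forall i j, 0 < A i j -> beta <= A i j.
Proof.
move=> HA; pose F (ij : 'I_N * 'I_N) := if 0 < A ij.1 ij.2 then A ij.1 ij.2 else 1.
have F01 ij : 0 < F ij <= 1.
  rewrite /F; case: ifP => [-> /= | _]; last by rewrite ltr01 lexx.
  rewrite -(HA.2 ij.1) (bigD1 ij.2) //= lerDl.
  by apply: sumr_ge0 => l _; exact: HA.1.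
have prod_le1 (P : pred ('I_N * 'I_N)) : \prod_(ij | P ij) F ij <= 1.
  by apply: prodr_ile1 => ij _; case/andP: (F01 ij) => /ltW -> ->.
exists (\prod_ij F ij).
  by rewrite prod_le1 andbT; apply: prodr_gt0 => ij _; case/andP: (F01 ij).
move=> i j Aij; rewrite (bigD1 (i, j)) //=.
have -> : F (i, j) = A i j by rewrite /F /= Aij.
by rewrite ger_pMr.
Qed.

Local Open Scope classical_set_scope.
Local Open Scope ring_scope.

Lemma geometric_small (R : realType) (a q e : R) : 0 <= q < 1 -> 0 < e ->
  exists m, a * q ^+ m < e.
Proof.
move=> /andP[q0 q1] e0.
have q_lt1 : `|q| < 1 by rewrite ger0_norm.
have /cvgr0Pnorm_lt /(_ e e0) [m0 _ hm] := cvg_geometric a q_lt1.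
by exists m0; apply: le_lt_trans (hm m0 (leqnn m0)); exact: ler_norm.
Qed.

Lemma word_reduces_disagreement (R : realType) (N : nat) (A : 'M[R]_N) :
  (0 < N)%N -> row_stochastic A -> rooted A ->
  forall (x1 : 'cV[R]_N) (eps : R), 0 < eps ->
  exists js : seq 'I_N, forall sig n t, word_at sig n js -> (n + size js <= t)%N ->
    disagreement (traj A sig x1 t) < eps.
Proof.
move=> N0 HA [r root_r] x1 eps eps0.
have [beta /andP[beta_gt0 beta_le1] beta_le] := positive_entries_ge HA.
set c := sweeps_gain r beta.
have c_gt0 : 0 < c by apply: exprn_gt0.
have c_le1 : c <= 1 by exact: sweeps_gain_le1.
have q01 : 0 <= (1 - c) ^+ 2 < 1.
  by rewrite sqr_ge0 /= expr2; nra.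
have [d0 hd0] := spread_le_exists x1.
have [m hm] := geometric_small (N%:R * d0 ^+ 2) q01 eps0.
set js := flatten (nseq m (sweeps r)).
exists js => sig n t hw hnt.
have hn : spread_le d0 (traj A sig x1 n) by rewrite -[n]add0n; exact: spread_le_traj.
have := spread_le_iter_sweeps HA root_r beta_gt0 beta_le1 beta_le m hn.
rewrite -traj_word // => /(spread_le_traj HA (t - (n + size js))).
rewrite subnKC // => ht.
apply: le_lt_trans (disagreement_le_spread N0 ht) _.
suff -> : N%:R * ((1 - c) ^+ m * d0) ^+ 2 = N%:R * d0 ^+ 2 * ((1 - c) ^+ 2) ^+ m by [].
by rewrite exprMn -exprM mulnC exprM; ring.
Qed.

Section Histories.
Context {d : measure_display} {T : measurableType d} {R : realType} {N : nat}.
Variable P : probability T R.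
Variable sigma : nat -> T -> {set 'I_N}.
Hypothesis sigma_measurable : forall n s, measurable (sigma n @^-1` [set s]).

Definition pr (E : set T) : R := fine (P E).

Lemma prE E : measurable E -> P E = (pr E)%:E.
Proof. by move=> mE; rewrite /pr fineK //; apply: fin_num_measure. Qed.

Lemma pr_ge0 E : 0 <= pr E.
Proof. exact/fine_ge0/measure_ge0. Qed.

Lemma pr_le1 E : measurable E -> pr E <= 1.
Proof. by move=> mE; rewrite -lee_fin -prE //; apply: probability_le1. Qed.

Lemma prU E F : measurable E -> measurable F -> E `&` F = set0 ->
  pr (E `|` F) = pr E + pr F.
Proof.
move=> mE mF EF0; have : P (E `|` F) = P E + P F by apply: measureU.
by rewrite !prE //; [case | exact: measurableU].
Qed.

Lemma pr_le E F : measurable E -> measurable F -> E `<=` F -> pr E <= pr F.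
Proof. by move=> mE mF EF; rewrite -lee_fin -!prE //; apply: le_measure; rewrite ?inE. Qed.

Lemma size_past n w : size (past sigma n w) = n.
Proof. by rewrite size_map size_iota. Qed.

Lemma past_rcons n w : past sigma n.+1 w = rcons (past sigma n w) (sigma n w).
Proof. by rewrite /past -addn1 iotaD map_cat cats1. Qed.

Lemma take_past m n w : (m <= n)%N -> take m (past sigma n w) = past sigma m w.
Proof. by move=> mn; rewrite /past -map_take take_iota (minn_idPl mn). Qed.

Lemma past_cat n k w :
  past sigma (n + k) w = past sigma n w ++ [seq sigma i w | i <- iota n k].
Proof. by rewrite /past iotaD map_cat. Qed.

Lemma past_event_rcons k h s :
  past_event sigma k.+1 (rcons h s) = past_event sigma k h `&` [set w | sigma k w = s].
Proof.
apply/seteqP; split => w; rewrite /past_event /= past_rcons.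
  by move/eqP; rewrite eqseq_rcons => /andP[/eqP -> /eqP ->].
by case=> -> ->.
Qed.

Lemma measurable_past_event n h : measurable (past_event sigma n h).
Proof.
elim: n h => [|n IH] h.
  case: h => [|s h].
    by rewrite (_ : past_event _ _ _ = setT) //; apply/seteqP; split => w.
  by rewrite (_ : past_event _ _ _ = set0) //; apply/seteqP; split => w.
case/lastP: h => [|h s].
  by rewrite (_ : past_event _ _ _ = set0) //; apply/seteqP; split => w.
by rewrite past_event_rcons; apply: measurableI; [exact: IH | exact: sigma_measurable].
Qed.

Lemma measurable_past_mem n (s : seq (seq {set 'I_N})) :
  measurable [set w | past sigma n w \in s].
Proof.
elim: s => [|h s IH].
  by rewrite (_ : [set w | _] = set0) //; apply/seteqP; split => w.
rewrite (_ : [set w | _] = past_event sigma n h `|` [set w | past sigma n w \in s]).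
  by apply: measurableU => //; exact: measurable_past_event.
apply/seteqP; split => w /=; rewrite in_cons.
  by case/orP => [/eqP|]; [left | right].
by case=> [->|->]; rewrite ?eqxx ?orbT.
Qed.

Definition histories n : seq (seq {set 'I_N}) := map val (enum {: n.-tuple {set 'I_N}}).

Lemma uniq_histories n : uniq (histories n).
Proof. by rewrite map_inj_uniq ?enum_uniq //; exact: val_inj. Qed.

Lemma size_histories n h : h \in histories n -> size h = n.
Proof. by case/mapP => t _ ->; rewrite size_tuple. Qed.

Lemma past_in_histories n w : past sigma n w \in histories n.
Proof.
have hs : size (past sigma n w) == n by rewrite size_past.
by apply/mapP; exists (Tuple hs); rewrite ?mem_enum.
Qed.

Lemma past_pred_mem n (Q : pred (seq {set 'I_N})) :
  [set w | Q (past sigma n w)] = [set w | past sigma n w \in [seq h <- histories n | Q h]].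
Proof. by apply/seteqP; split => w /=; rewrite mem_filter past_in_histories andbT. Qed.

Lemma measurable_past_pred n (Q : pred (seq {set 'I_N})) :
  measurable [set w | Q (past sigma n w)].
Proof. by rewrite past_pred_mem; exact: measurable_past_mem. Qed.

Lemma measurable_traj_pred (A : 'M[R]_N) x1 k (Q : pred 'cV[R]_N) :
  measurable [set w | Q (traj A (fun n => sigma n w) x1 k)].
Proof.
have -> : [set w | Q (traj A (fun n => sigma n w) x1 k)] =
    [set w | Q (traj A (nth [set: 'I_N]%SET (past sigma k w)) x1 k)].
  apply: eq_set => w; congr (Q _); apply: traj_eq_prefix => n nk.
  by rewrite (nth_map 0%N) ?size_iota // nth_iota.
exact: (measurable_past_pred k (fun h => Q (traj A (nth _ h) x1 k))).
Qed.

Lemma pr_past_mem n (G : set T) (s : seq (seq {set 'I_N})) :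
  measurable G -> uniq s ->
  pr (G `&` [set w | past sigma n w \in s]) =
  \sum_(h <- s) pr (G `&` past_event sigma n h).
Proof.
move=> mG; elim: s => [|h s IH] /=.
  rewrite big_nil (_ : _ `&` _ = set0) ?/pr ?measure0 //.
  by apply/seteqP; split => w // [].
move=> /andP[hs us]; rewrite big_cons -IH //.
rewrite (_ : _ `&` _ =
    (G `&` past_event sigma n h) `|` (G `&` [set w | past sigma n w \in s])).
  apply: prU.
  - by apply: measurableI => //; exact: measurable_past_event.
  - by apply: measurableI => //; exact: measurable_past_mem.
  - by apply/seteqP; split => w //= [[_ e] [_ hw]]; move: hs; rewrite -e hw.
apply/seteqP; split => w /=.
  by case=> gw; rewrite in_cons => /orP[/eqP|]; [left | right].
by case=> -[gw hw]; split => //; rewrite in_cons; [rewrite hw eqxx | rewrite hw orbT].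
Qed.

Lemma pr_past_pred n (G : set T) (Q : pred (seq {set 'I_N})) : measurable G ->
  pr (G `&` [set w | Q (past sigma n w)]) =
  \sum_(h <- histories n | Q h) pr (G `&` past_event sigma n h).
Proof.
by move=> mG; rewrite past_pred_mem pr_past_mem ?filter_uniq ?uniq_histories // big_filter.
Qed.

Lemma word_at_past n js w : word_at (fun i => sigma i w) n js =
  (drop n (past sigma (n + size js) w) == [seq [set j]%SET | j <- js]).
Proof. by rewrite past_cat drop_size_cat // size_past. Qed.

Lemma measurable_word_at n js :
  measurable [set w | word_at (fun i => sigma i w) n js].
Proof.
have -> : [set w | word_at (fun i => sigma i w) n js] =
    [set w | drop n (past sigma (n + size js) w) == [seq [set j]%SET | j <- js]].
  by apply/seteqP; split => w /=; rewrite word_at_past.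
exact: (measurable_past_pred (n + size js) (fun h => drop n h == _)).
Qed.

Lemma past_event_cat_word n h js : size h = n ->
  past_event sigma (n + size js) (h ++ [seq [set j]%SET | j <- js]) =
  past_event sigma n h `&` [set w | word_at (fun i => sigma i w) n js].
Proof.
move=> sh; apply/seteqP; split => w; rewrite /past_event /word_at /= past_cat.
  by move/eqP; rewrite eqseq_cat ?size_past ?sh // => /andP[/eqP -> ->].
by case=> -> /eqP ->.
Qed.

Variable alpha : R.
Hypothesis alpha_ge0 : 0 <= alpha.
Hypothesis alpha_le1 : alpha <= 1.
Hypothesis cond_prob_singleton_ge : forall k h (j : 'I_N),
  (0 < P (past_event sigma k h))%E -> alpha <= cond_prob P sigma k h [set j]%SET.

Lemma pr_past_event_rcons_ge k h (j : 'I_N) :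
  alpha * pr (past_event sigma k h) <= pr (past_event sigma k.+1 (rcons h [set j]%SET)).
Proof.
have [->|pe_neq0] := eqVneq (pr (past_event sigma k h)) 0; first by rewrite mulr0 pr_ge0.
have pe_gt0 : 0 < pr (past_event sigma k h) by rewrite lt0r pe_neq0 pr_ge0.
have := @cond_prob_singleton_ge k h j.
rewrite prE ?lte_fin //; last exact: measurable_past_event.
by move=> /(_ pe_gt0); rewrite /cond_prob -!/(pr _) ler_pdivlMr // past_event_rcons.
Qed.

Lemma pr_past_event_cat_ge js k h :
  alpha ^+ size js * pr (past_event sigma k h) <=
  pr (past_event sigma (k + size js) (h ++ [seq [set j]%SET | j <- js])).
Proof.
elim: js k h => [|j js IH] k h /=; first by rewrite expr0 mul1r addn0 cats0.
rewrite -cat_rcons addnS -addSn; apply: le_trans (IH k.+1 (rcons h [set j]%SET)).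
by rewrite exprSr -mulrA ler_wpM2l ?exprn_ge0 // pr_past_event_rcons_ge.
Qed.

Lemma pr_word_at_ge n (Q : pred (seq {set 'I_N})) js :
  alpha ^+ size js * pr [set w | Q (past sigma n w)] <=
  pr ([set w | Q (past sigma n w)] `&` [set w | word_at (fun i => sigma i w) n js]).
Proof.
have -> : pr [set w | Q (past sigma n w)] =
    \sum_(h <- histories n | Q h) pr (past_event sigma n h).
  rewrite -(setTI [set w | _]) (pr_past_pred n Q measurableT).
  by apply: eq_bigr => h _; rewrite setTI.
rewrite setIC (pr_past_pred n Q (measurable_word_at n js)) mulr_sumr.
rewrite big_seq_cond [X in _ <= X]big_seq_cond.
apply: ler_sum => h /andP[/size_histories hn _].
by rewrite setIC -(past_event_cat_word js hn) pr_past_event_cat_ge.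
Qed.

Lemma pr_block_missed_le n (Q : pred (seq {set 'I_N})) js :
  pr ([set w | Q (past sigma n w)] `&`
      [set w | ~~ word_at (fun i => sigma i w) n js]) <=
  (1 - alpha ^+ size js) * pr [set w | Q (past sigma n w)].
Proof.
set E := [set w | Q (past sigma n w)].
set W := [set w | word_at (fun i => sigma i w) n js].
have mE : measurable E := measurable_past_pred n Q.
have mW : measurable W := measurable_word_at n js.
have mW' : measurable (~` W) := measurableC mW.
have -> : [set w | ~~ word_at (fun i => sigma i w) n js] = ~` W.
  by apply/seteqP; split => w /=; [move/negP | move/negP].
have : pr E = pr (E `&` W) + pr (E `&` ~` W).
  rewrite -prU; first by rewrite -setIUr setUv setIT.
  - exact: measurableI.
  - exact: measurableI.
  - by rewrite setIACA setICr setI0.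
have := pr_word_at_ge n Q js; rewrite -/E -/W; lra.
Qed.

Definition word_missed K js := [set w |
  ~~ has (fun b => word_at (fun i => sigma i w) (b * size js) js) (iota 0 K)].

Lemma word_missed_past K js : exists Q : pred (seq {set 'I_N}),
  word_missed K js = [set w | Q (past sigma (K * size js) w)].
Proof.
pose U := [seq [set j]%SET | j <- js].
exists (fun h => ~~ has (fun b => drop (b * size js) (take (b * size js + size js) h) == U)
                   (iota 0 K)).
apply: eq_set => w; congr (~~ _); apply: eq_in_has => b.
rewrite mem_iota add0n => /andP[_ bK].
by rewrite take_past ?word_at_past // -mulSnr leq_mul2r bK orbT.
Qed.

Lemma measurable_word_missed K js : measurable (word_missed K js).
Proof. by have [Q ->] := word_missed_past K js; exact: measurable_past_pred. Qed.

Lemma word_missedS K js : word_missed K.+1 js =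
  word_missed K js `&` [set w | ~~ word_at (fun i => sigma i w) (K * size js) js].
Proof.
rewrite /word_missed; have -> : iota 0 K.+1 = iota 0 K ++ [:: K] by rewrite -addn1 iotaD.
apply/seteqP; split => w /=; rewrite has_cat /= orbF negb_or.
  by case/andP.
by case=> -> ->.
Qed.

Lemma pr_word_missed_le K js : pr (word_missed K js) <= (1 - alpha ^+ size js) ^+ K.
Proof.
elim: K => [|K IH]; first by rewrite expr0 pr_le1 //; exact: measurable_word_missed.
have [Q eQ] := word_missed_past K js.
rewrite word_missedS {1}eQ; apply: le_trans (pr_block_missed_le _ _ _) _.
rewrite -eQ exprS; apply: ler_wpM2l IH.
by rewrite subr_ge0 exprn_ile1.
Qed.

Lemma disagreement_ge_sub_word_missed (A : 'M[R]_N) x1 eps js K t :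
  (forall sig n t, word_at sig n js -> (n + size js <= t)%N ->
    disagreement (traj A sig x1 t) < eps) ->
  (K * size js <= t)%N ->
  [set w | eps <= disagreement (traj A (fun n => sigma n w) x1 t)] `<=` word_missed K js.
Proof.
move=> word_lt Kt w /= eps_le; apply/hasPn => b; rewrite mem_iota add0n => /andP[_ bK].
apply/negP => hw; have le_t : (b * size js + size js <= t)%N.
  by apply: leq_trans Kt; rewrite -mulSnr leq_mul2r bK orbT.
by have := word_lt _ _ t hw le_t; rewrite ltNge eps_le.
Qed.

End Histories.

Lemma cvg_geometric_blocks (R : realType) (u : nat -> R) (L : nat) (q : R) :
  0 <= q < 1 -> (forall K t, (K * L <= t)%N -> 0 <= u t <= q ^+ K) -> u @ \oo --> 0.
Proof.
move=> q01 hu; apply/cvgr0Pnorm_lt => e e0.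
have [K hK] := geometric_small 1 q01 e0.
exists (K * L)%N => // t /= hKt.
have /andP[u0 uq] := hu K t hKt.
by rewrite ger0_norm //; apply: le_lt_trans uq _; rewrite -[q ^+ K]mul1r.
Qed.

Theorem corollary4 (d : measure_display) (T : measurableType d) (R : realType)
  (N : nat) (P : probability T R) (A : 'M[R]_N)
  (sigma : nat -> T -> {set 'I_N}) (alpha : R) :
  (0 < N)%N ->
  row_stochastic A ->
  (forall (n : nat) (s : {set 'I_N}), measurable (sigma n @^-1` [set s])) ->
  rooted A ->
  0 < alpha < 1 ->
  (forall (k : nat) (h : seq {set 'I_N}) (s : {set 'I_N}),
      (0 < P (past_event sigma k h))%E ->
      cond_prob P sigma k h s != 0 -> alpha <= cond_prob P sigma k h s) ->
  (forall (k : nat) (h : seq {set 'I_N}) (j : 'I_N),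
      (0 < P (past_event sigma k h))%E ->
      cond_prob P sigma k h [set j] != 0) ->
  forall (eps : R) (x1 : 'cV[R]_N), 0 < eps ->
    (fun k : nat =>
       P [set w | eps <= disagreement (traj A (fun n => sigma n w) x1 k)])
      @ \oo --> 0%E.
Proof.
move=> N0 HA msig rootA /andP[alpha_gt0 alpha_lt1] cond_ge cond_neq0 eps x1 eps0.
have singleton_ge k h (j : 'I_N) : (0 < P (past_event sigma k h))%E ->
    alpha <= cond_prob P sigma k h [set j]%SET.
  by move=> pos; apply: cond_ge pos (cond_neq0 k h j pos).
have [js word_lt] := word_reduces_disagreement N0 HA rootA x1 eps0.
pose E t := [set w | eps <= disagreement (traj A (fun n => sigma n w) x1 t)].
have mE t : measurable (E t).
  exact: (measurable_traj_pred msig A x1 t (fun x => eps <= disagreement x)).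
apply: cvg_EFin; first by apply: nearW => t; apply: fin_num_measure; exact: mE.
have a_gt0 : 0 < alpha ^+ size js by exact: exprn_gt0.
have a_le1 : alpha ^+ size js <= 1 by rewrite exprn_ile1 // ltW.
have q01 : 0 <= 1 - alpha ^+ size js < 1 by apply/andP; split; lra.
apply: (cvg_geometric_blocks (L := size js) q01) => K t Kt.
apply/andP; split; first exact: pr_ge0.
apply: le_trans (pr_word_missed_le msig (ltW alpha_gt0) (ltW alpha_lt1) singleton_ge K js).
apply: pr_le (mE t) (measurable_word_missed msig K js) _.
exact: disagreement_ge_sub_word_missed word_lt Kt.
Qed.
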